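(* Let $K\subseteq\mathbb{R}^n$ be a closed convex cone that is facially exposed, and let $F$ be a face of $K$ with $F=\operatorname{cone}\{p_1,p_2\}=\{\alpha p_1+\beta p_2:\alpha,\beta\ge0\}$ for some linearly independent $p_1,p_2\in\mathbb{R}^n$. Then $K^*+F^\perp$ is closed.
   Context: $\mathbb{R}^n$ is identified with its dual. A face of $K$ is a closed convex $F\subseteq K$ such that $x\in F$, $y,z\in K$, $x\in(y,z)$ imply $y,z\in F$; it is exposed if $F=K\cap H$ for some supporting hyperplane $H$; $K$ is facially exposed if every nonempty face $F\ne K$ is exposed. $K^*=\{s:\langle s,x\rangle\ge0\ \forall x\in K\}$, $F^\perp=\{s:\langle s,x\rangle=0\ \forall x\in F\}$. *)

From mathcomp Require Import all_boot.
From Stdlib Require Import Reals.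
Open Scope R_scope.

Definition vec (n : nat) := 'I_n -> R.

Definition vzero {n} : vec n := fun _ => 0.
Definition vadd {n} (x y : vec n) : vec n := fun i => x i + y i.
Definition vscale {n} (a : R) (x : vec n) : vec n := fun i => a * x i.
Definition vsub {n} (x y : vec n) : vec n := fun i => x i - y i.

(* Standard inner product (R^n identified with its dual). *)
Definition inner {n} (x y : vec n) : R := \big[Rplus/0]_(i < n) (x i * y i).

Definition norm {n} (x : vec n) : R := sqrt (inner x x).

Definition is_closed {n} (S : vec n -> Prop) : Prop :=
  forall x, (forall eps, 0 < eps -> exists y, S y /\ norm (vsub x y) < eps) -> S x.

Definition is_convex {n} (S : vec n -> Prop) : Prop :=
  forall x y t, S x -> S y -> 0 <= t <= 1 ->
    S (vadd (vscale t x) (vscale (1 - t) y)).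

Definition is_convex_cone {n} (K : vec n -> Prop) : Prop :=
  K vzero /\
  (forall x y, K x -> K y -> K (vadd x y)) /\
  (forall a x, 0 <= a -> K x -> K (vscale a x)).

Definition is_closed_convex_cone {n} (K : vec n -> Prop) : Prop :=
  is_convex_cone K /\ is_closed K.

Definition subset {n} (A B : vec n -> Prop) : Prop := forall x, A x -> B x.
Definition set_eq {n} (A B : vec n -> Prop) : Prop := forall x, A x <-> B x.

Definition in_open_segment {n} (x y z : vec n) : Prop :=
  exists t, 0 < t < 1 /\ x = vadd (vscale t y) (vscale (1 - t) z).

Definition is_face {n} (K F : vec n -> Prop) : Prop :=
  subset F K /\ is_closed F /\ is_convex F /\
  forall x y z, F x -> K y -> K z -> in_open_segment x y z -> F y /\ F z.

Definition exposed_face {n} (K F : vec n -> Prop) : Prop :=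
  exists (s : vec n) (b : R),
    s <> vzero /\
    (forall x, K x -> b <= inner s x) /\
    set_eq F (fun x => K x /\ inner s x = b).

Definition facially_exposed {n} (K : vec n -> Prop) : Prop :=
  forall F, is_face K F -> (exists x, F x) -> ~ set_eq F K -> exposed_face K F.

Definition dual_cone {n} (K : vec n -> Prop) : vec n -> Prop :=
  fun s => forall x, K x -> 0 <= inner s x.

Definition perp {n} (F : vec n -> Prop) : vec n -> Prop :=
  fun s => forall x, F x -> inner s x = 0.

Definition minkowski_sum {n} (A B : vec n -> Prop) : vec n -> Prop :=
  fun z => exists a b, A a /\ B b /\ z = vadd a b.

Definition cone2 {n} (p1 p2 : vec n) : vec n -> Prop :=
  fun x => exists a b, 0 <= a /\ 0 <= b /\ x = vadd (vscale a p1) (vscale b p2).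

Definition lin_indep2 {n} (p1 p2 : vec n) : Prop :=
  forall a b, vadd (vscale a p1) (vscale b p2) = vzero -> a = 0 /\ b = 0.

(* Since F is a face spanned by p1 and p2, its extreme rays cone{p1} and
   cone{p2} are faces of K as well; facial exposedness then yields, for each
   of them, a functional in K* vanishing on that ray and positive on the other
   generator.  Rescaled, these give y1, y2 in K* with <yi, pj> = delta_ij.
   Every limit point z of K* + F^perp satisfies <z, pi> >= 0, so
   y := <z, p1> y1 + <z, p2> y2 lies in K* and z - y lies in F^perp. *)

From Pilot Require Import Defs.
From HB Require Import structures.
From mathcomp Require Import all_boot.
From Stdlib Require Import Reals Lra FunctionalExtensionality Classical.
Open Scope R_scope.

HB.instance Definition _ :=
  Monoid.isComLaw.Build R 0 Rplus
    (fun a b c => esym (Rplus_assoc a b c)) Rplus_comm Rplus_0_l.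

Ltac vec_eq :=
  apply: functional_extensionality => ?; rewrite /vadd /vsub /vscale /vzero; ring.

Definition in_closure {n} (P : vec n -> Prop) (x : vec n) : Prop :=
  forall eps, 0 < eps -> exists y, P y /\ norm (vsub x y) < eps.

Definition ray {n} (p : vec n) : vec n -> Prop :=
  fun x => exists c, 0 <= c /\ x = vscale c p.

Section InnerProduct.
Context {n : nat}.
Implicit Types x y z : vec n.

Lemma inner_comm x y : inner x y = inner y x.
Proof. by apply: eq_bigr => i _; ring. Qed.

Lemma inner_addl x y z : inner (vadd x y) z = inner x z + inner y z.
Proof.
apply: (big_rec3 (fun a b c => a = b + c)); first ring.
by move=> i a b c _ ->; rewrite /vadd; ring.
Qed.

Lemma inner_subl x y z : inner (vsub x y) z = inner x z - inner y z.
Proof.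
apply: (big_rec3 (fun a b c => a = b - c)); first ring.
by move=> i a b c _ ->; rewrite /vsub; ring.
Qed.

Lemma inner_scalel a x z : inner (vscale a x) z = a * inner x z.
Proof.
apply: (big_rec2 (fun b c => b = a * c)); first ring.
by move=> i b c _ ->; rewrite /vscale; ring.
Qed.

Lemma inner_zerol z : inner vzero z = 0.
Proof. by apply: (big_rec (fun b => b = 0)) => // i b _ ->; rewrite /vzero; ring. Qed.

Lemma inner_addr x y z : inner z (vadd x y) = inner z x + inner z y.
Proof. by rewrite !(inner_comm z) inner_addl. Qed.

Lemma inner_scaler a x z : inner z (vscale a x) = a * inner z x.
Proof. by rewrite !(inner_comm z) inner_scalel. Qed.

Lemma inner_zeror z : inner z vzero = 0.
Proof. by rewrite inner_comm inner_zerol. Qed.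

Lemma sqr_coord_le_inner x i : x i * x i <= inner x x.
Proof.
rewrite /inner (bigD1 i) //= -{1}[x i * x i]Rplus_0_r.
apply: Rplus_le_compat_l.
by apply: (big_rec (fun b => 0 <= b)) => [|j b _ Hb]; nra.
Qed.

Lemma inner_gt0 {x} : x <> vzero -> 0 < inner x x.
Proof.
move=> x_nz; have [i xi_nz] : exists i, x i <> 0.
  apply: NNPP => all0; apply: x_nz; apply: functional_extensionality => i.
  by apply: NNPP => xi_nz; apply: all0; exists i.
by have := sqr_coord_le_inner x i; nra.
Qed.

Lemma abs_coord_le_norm x i : Rabs (x i) <= norm x.
Proof.
rewrite -sqrt_Rsqr_abs; apply: sqrt_le_1_alt; exact: sqr_coord_le_inner.
Qed.

Lemma abs_inner_le x p :
  Rabs (inner x p) <= norm x * \big[Rplus/0]_(i < n) Rabs (p i).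
Proof.
apply: (big_rec2 (fun a b => Rabs a <= norm x * b)).
  by rewrite Rabs_R0 Rmult_0_r; lra.
move=> i a b _ IH.
have := abs_coord_le_norm x i; have := Rabs_triang (x i * p i) a.
have := Rabs_pos (p i); have := Rabs_pos (x i); rewrite Rabs_mult; nra.
Qed.

End InnerProduct.

Section Closure.
Context {n : nat}.
Implicit Types (P : vec n -> Prop) (z p : vec n).

Lemma in_closure_inner {P z} p :
  in_closure P z -> forall d, 0 < d -> exists y, P y /\ Rabs (inner z p - inner y p) < d.
Proof.
move=> Pz d d_gt0.
set M := \big[Rplus/0]_(i < n) Rabs (p i).
have M_ge0 : 0 <= M.
  apply: (big_rec (fun b => 0 <= b)) => [|i b _ Hb]; first lra.
  by have := Rabs_pos (p i); lra.
have [y [Py zy_small]] := Pz (d / (M + 1)) ltac:(apply: Rdiv_lt_0_compat; lra).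
exists y; split => //; rewrite -inner_subl.
have := abs_inner_le (vsub z y) p; rewrite -/M.
have : norm (vsub z y) * (M + 1) < d.
  have := Rmult_lt_compat_r (M + 1) _ _ ltac:(lra) zy_small.
  by rewrite /Rdiv Rmult_assoc Rinv_l; lra.
have := sqrt_pos (inner (vsub z y) (vsub z y)); rewrite -/(norm _); nra.
Qed.

Lemma in_closure_inner_ge0 {P z p} :
  in_closure P z -> (forall y, P y -> 0 <= inner y p) -> 0 <= inner z p.
Proof.
move=> Pz P_ge0; apply: Rnot_lt_le => z_lt0.
have [y [Py Hy]] := in_closure_inner p Pz (- inner z p) ltac:(lra).
have := P_ge0 y Py; have := Rle_abs (- (inner z p - inner y p)).
by rewrite Rabs_Ropp; lra.
Qed.

Lemma in_closure_inner_eq0 {P z p} :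
  in_closure P z -> (forall y, P y -> inner y p = 0) -> inner z p = 0.
Proof.
move=> Pz P_eq0; apply: NNPP => z_nz.
have [y [Py Hy]] := in_closure_inner p Pz _ (Rabs_pos_lt _ z_nz).
by rewrite (P_eq0 y Py) Rminus_0_r in Hy; lra.
Qed.

Lemma in_closure_sub {P S : vec n -> Prop} {z} :
  is_closed S -> Defs.subset P S -> in_closure P z -> S z.
Proof.
move=> S_closed PS Pz; apply: S_closed => eps eps_gt0.
by have [y [Py Hy]] := Pz eps eps_gt0; exists y; split => //; apply: PS.
Qed.

End Closure.

Section TwoGenerators.
Context {n : nat} (p1 p2 : vec n).

Lemma cone2_l : cone2 p1 p2 p1.
Proof. by exists 1, 0; do 2 (split; first lra); vec_eq. Qed.

Lemma cone2_r : cone2 p1 p2 p2.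
Proof. by exists 0, 1; do 2 (split; first lra); vec_eq. Qed.

Lemma cone2C : set_eq (cone2 p1 p2) (cone2 p2 p1).
Proof. by move=> x; split=> -[a [b [Ha [Hb ->]]]]; exists b, a; do 2 split => //; vec_eq. Qed.

Lemma ray_sub_cone2 : Defs.subset (ray p2) (cone2 p1 p2).
Proof. by move=> x [c [Hc ->]]; exists 0, c; split; [lra | split => //; vec_eq]. Qed.

End TwoGenerators.

Section TwoIndependentGenerators.
Context {n : nat} {p1 p2 : vec n}.
Hypothesis indep : lin_indep2 p1 p2.

Lemma lin_indep2C : lin_indep2 p2 p1.
Proof.
move=> a b E; have [? ?] : b = 0 /\ a = 0 by apply: indep; rewrite -E; vec_eq.
by split.
Qed.

Lemma lin_indep2_coef_inj a b c d :
  vadd (vscale a p1) (vscale b p2) = vadd (vscale c p1) (vscale d p2) ->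
  a = c /\ b = d.
Proof.
move=> E; have [? ?] : a - c = 0 /\ b - d = 0.
  apply: indep; apply: functional_extensionality => i.
  by have := f_equal (fun f => f i) E; rewrite /vadd /vscale /vzero; lra.
by split; lra.
Qed.

Lemma lin_indep2_neq0r : p2 <> vzero.
Proof.
move=> p2_0; have [_] : 0 = 0 /\ 1 = 0 by apply: indep; rewrite p2_0; vec_eq.
lra.
Qed.

Lemma notin_ray_l : ~ ray p2 p1.
Proof.
move=> [c [_ E]]; have [] : 1 = 0 /\ 0 = c by apply: lin_indep2_coef_inj; rewrite -E; vec_eq.
lra.
Qed.

Lemma orth_functional : exists q, inner q p2 = 0 /\ inner q p1 <> 0.
Proof.
set q := vsub (vscale (inner p2 p2) p1) (vscale (inner p1 p2) p2).
have q_p2 : inner q p2 = 0 by rewrite /q inner_subl !inner_scalel (inner_comm p1); ring.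
have q_nz : q <> vzero.
  move=> q0; have [p22_0 _] : inner p2 p2 = 0 /\ - inner p1 p2 = 0.
    by apply: indep; rewrite -q0 /q; vec_eq.
  by have := inner_gt0 lin_indep2_neq0r; lra.
have q_q : inner q q = inner p2 p2 * inner q p1.
  by rewrite {1}/q inner_subl !inner_scalel (inner_comm p1) (inner_comm p2) q_p2; ring.
exists q; split => // q_p1; have := inner_gt0 q_nz; rewrite q_q q_p1; lra.
Qed.

End TwoIndependentGenerators.

Section ExtremeRayOfTwoDimensionalFace.
Context {n : nat} {K F : vec n -> Prop} {p1 p2 : vec n}.
Hypotheses (F_face : is_face K F) (indep : lin_indep2 p1 p2)
  (F_cone2 : set_eq F (cone2 p1 p2)).

Let ray_sub_F : Defs.subset (ray p2) F.
Proof. by move=> x /(ray_sub_cone2 p1) /F_cone2. Qed.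

Lemma ray_closed : is_closed (ray p2).
Proof.
move=> z z_cl; have [q [q_p2 q_p1]] := orth_functional indep.
have /F_cone2 [a [b [Ha [Hb z_ab]]]] : F z.
  by apply: in_closure_sub z_cl => //; case: F_face => _ [].
have : inner z q = 0.
  apply: (in_closure_inner_eq0 z_cl) => _ [c [_ ->]].
  by rewrite inner_scalel (inner_comm p2) q_p2 Rmult_0_r.
rewrite inner_comm z_ab inner_addr !inner_scaler q_p2 => qz.
have a0 : a = 0 by apply: NNPP => a_nz; apply: q_p1; nra.
by exists b; split => //; rewrite a0; vec_eq.
Qed.

Lemma ray_face : is_face K (ray p2).
Proof.
have [FK [_ [_ F_ext]]] := F_face.
split; first by move=> x /ray_sub_F /FK.
split; first exact: ray_closed.
split.
  move=> x y t [c [Hc ->]] [d [Hd ->]] Ht.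
  by exists (t * c + (1 - t) * d); split; [nra | vec_eq].
move=> x y z x_ray Ky Kz seg.
have [/F_cone2 [a1 [b1 [Ha1 [Hb1 Ey]]]] /F_cone2 [a2 [b2 [Ha2 [Hb2 Ez]]]]] :=
  F_ext x y z (ray_sub_F x x_ray) Ky Kz seg.
have [c [_ Ex]] := x_ray; have [t [Ht Es]] := seg.
have [Ha _] : t * a1 + (1 - t) * a2 = 0 /\ t * b1 + (1 - t) * b2 = c.
  by apply: (lin_indep2_coef_inj indep); rewrite -Ex Es Ey Ez; vec_eq.
have [a1_0 a2_0] : a1 = 0 /\ a2 = 0 by split; nra.
by split; [exists b1 | exists b2]; split => //;
  [rewrite Ey a1_0 | rewrite Ez a2_0]; vec_eq.
Qed.

(* The ray contains 0, so the hyperplane exposing it passes through the origin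
   and its normal lies in K*. *)
Lemma dual_cone_coord_functional :
  facially_exposed K -> exists y, dual_cone K y /\ inner y p1 = 1 /\ inner y p2 = 0.
Proof.
move=> K_exposed.
have ray0 : ray p2 vzero by exists 0; split; [lra | vec_eq].
have ray_p2 : ray p2 p2 by exists 1; split; [lra | vec_eq].
have K_p1 : K p1 by case: F_face => FK _; apply/FK/F_cone2/cone2_l.
have [s [b [_ [s_ge_b s_exposes]]]] : exposed_face K (ray p2).
  apply: K_exposed; [exact: ray_face | by exists vzero |].
  by move=> E; apply: (notin_ray_l indep); apply/E.
have b0 : b = 0 by have [_ <-] := proj1 (s_exposes vzero) ray0; rewrite inner_zeror.
subst b.
have [_ s_p2] := proj1 (s_exposes p2) ray_p2.
have s_p1 : 0 < inner s p1.
  case/Rle_lt_or_eq_dec: (s_ge_b p1 K_p1) => // E.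
  by case: (notin_ray_l indep); apply/s_exposes.
exists (vscale (/ inner s p1) s); rewrite !inner_scalel s_p2; split; last first.
  by split; [field|]; lra.
move=> x Kx; rewrite inner_scalel; apply: Rmult_le_pos; last exact: s_ge_b.
by apply/Rlt_le/Rinv_0_lt_compat.
Qed.

End ExtremeRayOfTwoDimensionalFace.

Lemma dual_plus_perp_ge0 {n} {K F : vec n -> Prop} {p y : vec n} :
  Defs.subset F K -> F p -> minkowski_sum (dual_cone K) (perp F) y -> 0 <= inner y p.
Proof.
move=> FK Fp [a [b [Ka [Fb ->]]]].
by rewrite inner_addl (Fb p Fp) Rplus_0_r; apply: Ka; apply: FK.
Qed.

Theorem propositionA3 (n : nat) (K F : vec n -> Prop) (p1 p2 : vec n) :
  is_closed_convex_cone K ->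
  facially_exposed K ->
  is_face K F ->
  lin_indep2 p1 p2 ->
  set_eq F (cone2 p1 p2) ->
  is_closed (minkowski_sum (dual_cone K) (perp F)).
Proof.
(* Facial structure alone suffices: K need not be a closed convex cone. *)
move=> _ K_exposed F_face indep F_cone2.
have [y1 [y1_dual [y1_p1 y1_p2]]] :=
  dual_cone_coord_functional F_face indep F_cone2 K_exposed.
have F_cone2C : set_eq F (cone2 p2 p1) by move=> x; rewrite F_cone2 cone2C.
have [y2 [y2_dual [y2_p2 y2_p1]]] :=
  dual_cone_coord_functional F_face (lin_indep2C indep) F_cone2C K_exposed.
have FK : Defs.subset F K by case: F_face.
have F_p1 : F p1 by apply/F_cone2/cone2_l.
have F_p2 : F p2 by apply/F_cone2/cone2_r.
move=> z z_cl.
have z_p1 := in_closure_inner_ge0 z_cl (fun _ => dual_plus_perp_ge0 FK F_p1).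
have z_p2 := in_closure_inner_ge0 z_cl (fun _ => dual_plus_perp_ge0 FK F_p2).
set y := vadd (vscale (inner z p1) y1) (vscale (inner z p2) y2).
exists y, (vsub z y); split; last split; last by vec_eq.
  move=> x Kx; rewrite /y inner_addl !inner_scalel.
  by have := y1_dual x Kx; have := y2_dual x Kx; nra.
move=> x /F_cone2 [a [b [_ [_ ->]]]].
rewrite inner_addr !inner_scaler !inner_subl /y !inner_addl !inner_scalel.
by rewrite y1_p1 y1_p2 y2_p1 y2_p2; ring.
Qed.
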